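(* For any signed graph $(G,\sigma)$, $\chi_c\big((G,\sigma)\square(G,\sigma)\big)=\chi_c(G,\sigma)$.
   Context: A signed graph $(G,\sigma)$ is a finite graph $G$ (multiple edges allowed, no loops) with a signature $\sigma:E(G)\to\{+1,-1\}$. For real $r\ge 2$, $C^r$ is the circle of circumference $r$, $d_{C^r}(x,y)=\min\{|x-y|,r-|x-y|\}$, $\overline{x}=x+r/2\pmod r$. A circular $r$-coloring of $(G,\sigma)$ is $f:V(G)\to C^r$ with $d_{C^r}(f(u),f(v))\ge1$ for each positive edge $uv$ and $d_{C^r}(f(u),\overline{f(v)})\ge1$ for each negative edge $uv$; $\chi_c(G,\sigma)$ is the infimum of such $r\ge2$. The Type 1 Cartesian product $(G,\sigma)\square(H,\tau)$ has vertex set $V(G)\times V(H)$, with $(u,x)(v,y)$ an edge iff either $u=v$ and $xy\in E(H)$, or $x=y$ and $uv\in E(G)$; the edge $(u,x)(v,x)$ has sign $\sigma(uv)$ and the edge $(u,x)(u,y)$ has sign $\tau(xy)$. *)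

From HB Require Import structures.
From mathcomp Require Import all_boot all_order all_algebra.
From mathcomp Require Import boolp classical_sets reals.
Set Implicit Arguments. Unset Strict Implicit. Unset Printing Implicit Defensive.
Import Order.TTheory GRing.Theory Num.Theory.
Local Open Scope ring_scope.
Local Open Scope classical_set_scope.

(* A signed (multi)graph is given by a finite vertex type V, a finite edge
   type E, an endpoint map ends : E -> V * V (loops excluded by a separate
   hypothesis) and a signature sg : E -> bool, where [true] means +1 and
   [false] means -1. *)

Section Circular.
Variable R : realType.

(* distance on the circle C^r, points represented in [0, r) *)
Definition cdist (r x y : R) : R := Num.min `|x - y| (r - `|x - y|).

Definition cbar (r x : R) : R := if x + r / 2 < r then x + r / 2 else x - r / 2.

Definition circ_coloring (V E : finType) (ends : E -> V * V) (sg : E -> bool)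
  (r : R) (f : V -> R) : Prop :=
  (forall v, 0 <= f v < r) /\
  (forall e, if sg e then 1 <= cdist r (f (ends e).1) (f (ends e).2)
             else 1 <= cdist r (f (ends e).1) (cbar r (f (ends e).2))).

Definition chi_c (V E : finType) (ends : E -> V * V) (sg : E -> bool) : R :=
  inf [set r : R | 2 <= r /\ exists f : V -> R, circ_coloring ends sg r f].
End Circular.

(* Type 1 Cartesian product: edges (u,x)(v,x) for uv in E1, x in V2, with
   sign of uv; edges (u,x)(u,y) for u in V1, xy in E2, with sign of xy. *)
Definition prod_ends (V1 E1 V2 E2 : finType) (ends1 : E1 -> V1 * V1)
  (ends2 : E2 -> V2 * V2) (e : ((E1 * V2) + (V1 * E2))%type)
  : (V1 * V2) * (V1 * V2) :=
  match e with
  | inl (e1, x) => (((ends1 e1).1, x), ((ends1 e1).2, x))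
  | inr (u, e2) => ((u, (ends2 e2).1), (u, (ends2 e2).2))
  end.

Definition prod_sign (V1 E1 V2 E2 : finType) (sg1 : E1 -> bool) (sg2 : E2 -> bool)
  (e : ((E1 * V2) + (V1 * E2))%type) : bool :=
  match e with
  | inl (e1, _) => sg1 e1
  | inr (_, e2) => sg2 e2
  end.

(** The copy of (G, sigma) at a fixed second coordinate is a subgraph of the
    product, so every circular r-coloring of the product restricts to one of
    (G, sigma).  Conversely, if f is a circular r-coloring of (G, sigma), then
    (u, x) |-> f u + f x (mod r) colors the product: along each edge one
    coordinate is fixed, and rotations of C^r are isometries commuting with
    the antipodal map. *)

From HB Require Import structures.
From mathcomp Require Import all_boot all_order all_algebra.
From mathcomp Require Import boolp classical_sets reals.
From mathcomp Require Import lra.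
Import Order.TTheory GRing.Theory Num.Theory.
Set Implicit Arguments. Unset Strict Implicit. Unset Printing Implicit Defensive.
Local Open Scope ring_scope.

Section Rotation.
Variable R : realType.
Implicit Types r c x y : R.

Definition crot r c x : R := if x + c < r then x + c else x + c - r.

Ltac case_ifs := repeat (case: ifPn; rewrite -?leNgt => ?).

Lemma crot_range r c x : 0 <= c < r -> 0 <= x < r -> 0 <= crot r c x < r.
Proof. by move=> /andP[? ?] /andP[? ?]; rewrite /crot; case_ifs; apply/andP; split; lra. Qed.

Lemma crotC r c x : crot r c x = crot r x c.
Proof. by rewrite /crot addrC. Qed.

Lemma cbarE r x : cbar r x = crot r (r / 2) x.
Proof. by rewrite /cbar /crot; case: ifP => // _; lra. Qed.

Lemma cdist_sub r x y x' y' : x' - y' = x - y -> cdist r x' y' = cdist r x y.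
Proof. by rewrite /cdist => ->. Qed.

Lemma cdist_compl r x y x' y' : `|x' - y'| = r - `|x - y| -> cdist r x' y' = cdist r x y.
Proof. by rewrite /cdist => ->; rewrite subKr minC. Qed.

Lemma cdist_crot r c x y : 0 <= c < r -> 0 <= x < r -> 0 <= y < r ->
  cdist r (crot r c x) (crot r c y) = cdist r x y.
Proof.
move=> /andP[? ?] /andP[? ?] /andP[? ?]; rewrite /crot.
case: ifPn; case: ifPn; rewrite -?leNgt => ? ?.
- by apply: cdist_sub; lra.
- apply: cdist_compl; rewrite gtr0_norm ?ltr0_norm; lra.
- apply: cdist_compl; rewrite ltr0_norm ?gtr0_norm; lra.
- by apply: cdist_sub; lra.
Qed.

Lemma crotCA r c d x : 0 <= c < r -> 0 <= d < r -> 0 <= x < r ->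
  crot r c (crot r d x) = crot r d (crot r c x).
Proof.
move=> /andP[? ?] /andP[? ?] /andP[? ?].
rewrite [crot r d x]/crot [crot r c x]/crot; case_ifs; rewrite /crot; case_ifs; lra.
Qed.
End Rotation.

Section Coloring.
Variable R : realType.

Lemma circ_coloring_crot (V E : finType) (ends : E -> V * V) (sg : E -> bool)
    (r c : R) (f : V -> R) :
  0 <= c < r -> circ_coloring ends sg r f -> circ_coloring ends sg r (crot r c \o f).
Proof.
move=> c_rng [f_rng f_edge]; split=> [v | e] /=; first exact: crot_range.
have half_rng : 0 <= r / 2 < r by case/andP: c_rng => ? ?; apply/andP; split; lra.
have := f_edge e; case: (sg e).
  by rewrite cdist_crot.
by rewrite !cbarE crotCA // cdist_crot // crot_range.
Qed.

Section Product.
Variables (V1 E1 V2 E2 : finType).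
Variables (ends1 : E1 -> V1 * V1) (sg1 : E1 -> bool).
Variables (ends2 : E2 -> V2 * V2) (sg2 : E2 -> bool).

Lemma circ_coloring_prod (r : R) (f1 : V1 -> R) (f2 : V2 -> R) :
  circ_coloring ends1 sg1 r f1 -> circ_coloring ends2 sg2 r f2 ->
  circ_coloring (prod_ends ends1 ends2) (prod_sign sg1 sg2) r
    (fun p => crot r (f2 p.2) (f1 p.1)).
Proof.
move=> col1 col2; split=> [[u x] | [[e x] | [u e]]] /=.
- exact: crot_range (col2.1 x) (col1.1 u).
- exact: (circ_coloring_crot (col2.1 x) col1).2 e.
- rewrite ![crot r _ (f1 u)]crotC.
  exact: (circ_coloring_crot (col1.1 u) col2).2 e.
Qed.

Lemma circ_coloring_slice (r : R) (F : V1 * V2 -> R) (x : V2) :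
  circ_coloring (prod_ends ends1 ends2) (prod_sign sg1 sg2) r F ->
  circ_coloring ends1 sg1 r (fun u => F (u, x)).
Proof. by case=> F_rng F_edge; split=> [u | e]; [exact: F_rng | exact: F_edge (inl (e, x))]. Qed.

End Product.

Lemma circ_coloring_void (V E : finType) (ends : E -> V * V) (sg : E -> bool)
    (r : R) (f : V -> R) :
  (V -> False) -> circ_coloring ends sg r f.
Proof. by move=> V0; split=> [v | e]; [case: (V0 v) | case: (V0 (ends e).1)]. Qed.

Lemma chi_c_eq (V1 E1 V2 E2 : finType) (ends1 : E1 -> V1 * V1) (sg1 : E1 -> bool)
    (ends2 : E2 -> V2 * V2) (sg2 : E2 -> bool) :
  (forall r : R, 2 <= r ->
     (exists f, circ_coloring ends1 sg1 r f) <-> (exists f, circ_coloring ends2 sg2 r f)) ->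
  chi_c R ends1 sg1 = chi_c R ends2 sg2.
Proof.
move=> col_iff; rewrite /chi_c; congr inf; apply/seteqP.
by split=> r [r_ge2 col]; split=> //; apply/(col_iff r r_ge2).
Qed.

End Coloring.

Theorem proposition1 (R : realType) (V E : finType) (ends : E -> V * V)
  (sg : E -> bool) (noloop : forall e, (ends e).1 != (ends e).2) :
  chi_c R (prod_ends (V2:=V) (E2:=E) ends ends) (prod_sign (V1:=V) (V2:=V) sg sg)
  = chi_c R ends sg.
Proof.
apply: chi_c_eq => r _; split=> [[F colF] | [f colf]].
- have [x _ | V0] := pickP (@predT V).
    by exists (fun u => F (u, x)); apply: circ_coloring_slice colF.
  by exists (fun _ => 0); apply: circ_coloring_void => v; have := V0 v.
- by exists (fun p => crot r (f p.2) (f p.1)); apply: circ_coloring_prod.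
Qed.
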